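(* Let $H$ be a real Hilbert space with inner product $(\cdot,\cdot)_H$, let $F:H\to\mathbb{R}$ be continuously Fréchet differentiable with gradient $\nabla F$, and for each $\Phi\in H$ let $\mathbf{L}(\Phi)=\mathbf{M}(\Phi)+\mathbf{S}(\Phi)$ with $\mathbf{M}(\Phi)$ a symmetric and $\mathbf{S}(\Phi)$ a skew-symmetric linear operator on $H$. Let $I_{n+\frac12}=[t_n,t_{n+1}]$, let $s\ge 1$, and let $\Phi^n\in H$ be given. Suppose $\Phi_h\in\mathbb{P}_s(I_{n+\frac12})\otimes H$ with $\Phi_h(t_n)=\Phi^n$ and $\mu_h\in\mathbb{P}_{s-1}(I_{n+\frac12})\otimes H$ satisfy, for all $U_h,\nu_h\in\mathbb{P}_{s-1}(I_{n+\frac12})\otimes H$, $$\int_{I_{n+\frac12}}(\dot\Phi_h,U_h)_H\,dt=\int_{I_{n+\frac12}}(\mathbf{L}(\Phi_h)\mu_h,U_h)_H\,dt,\qquad \int_{I_{n+\frac12}}(\mu_h,\nu_h)_H\,dt=\int_{I_{n+\frac12}}(\nabla F(\Phi_h),\nu_h)_H\,dt,$$ (all integrands assumed integrable). Setting $\Phi^{n+1}=\Phi_h(t_{n+1})$, one has $$F(\Phi^{n+1})-F(\Phi^n)=\int_{I_{n+\frac12}}\big(\mathbf{M}(\Phi_h)\mu_h,\mu_h\big)_H\,dt.$$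
   Context: $\mathbb{P}_s(I)$ denotes the space of real polynomials on the interval $I$ of degree at most $s$, and $\mathbb{P}_s(I)\otimes H$ the $H$-valued polynomials in $t$ of degree at most $s$. Symmetric/skew-symmetric: $(\mathbf{A}\Phi,\Psi)_H=\pm(\Phi,\mathbf{A}\Psi)_H$ for all $\Phi,\Psi$. *)

From HB Require Import structures.
From mathcomp Require Import all_boot all_order all_algebra.
From mathcomp Require Import all_classical all_reals all_analysis.
Set Implicit Arguments. Unset Strict Implicit. Unset Printing Implicit Defensive.
Import Order.TTheory GRing.Theory Num.Theory.
Import numFieldNormedType.Exports.
Local Open Scope ring_scope.

Definition is_inner_product (R : realType) (H : normedModType R)
  (ip : H -> H -> R) : Prop :=
  [/\ forall x y, ip x y = ip y x,
      forall a x y z, ip (a *: x + y) z = a * ip x z + ip y z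
    & forall x, ip x x = `|x| ^+ 2].

Definition is_linear_op (R : realType) (H : normedModType R) (A : H -> H) : Prop :=
  forall a x y, A (a *: x + y) = a *: A x + A y.

Definition Hpoly (R : realType) (H : normedModType R) (s : nat) (f : R -> H) : Prop :=
  exists a : nat -> H, forall t : R, f t = \sum_(k < s.+1) (t ^+ k) *: a k.

From HB Require Import structures.
From mathcomp Require Import all_boot all_order all_algebra.
From mathcomp Require Import all_classical all_reals all_analysis.
From mathcomp Require Import ring lra.
Import Order.TTheory GRing.Theory Num.Theory.
Import numFieldNormedType.Exports.
Local Open Scope classical_set_scope.
Local Open Scope ring_scope.
Set Implicit Arguments. Unset Strict Implicit. Unset Printing Implicit Defensive.

(* Testing the first equation with U = mu and the second with nu = Phi' (which
   lies in P_(s-1) since Phi lies in P_s) gives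
     (Phi', grad F(Phi)) = (Phi', mu) = (L(Phi) mu, mu) = (M(Phi) mu, mu)
   after integration over I, the skew part dropping out since (S x, x) = 0.
   The left-hand side is the integral of (F o Phi)', so the fundamental theorem
   of calculus turns it into F(Phi(t_(n+1))) - F(Phi(t_n)). *)

Section InnerProduct.
Variables (R : realType) (H : normedModType R) (ip : H -> H -> R).
Hypothesis hip : is_inner_product ip.

Lemma ipC x y : ip x y = ip y x.
Proof. by case: hip. Qed.

Lemma ipDl u v w : ip (u + v) w = ip u w + ip v w.
Proof. by have [_ hl _] := hip; have := hl 1 u v w; rewrite scale1r mul1r. Qed.

Lemma ip_polarization x y :
  ip x y = (`|x + y| ^+ 2 - `|x| ^+ 2 - `|y| ^+ 2) / 2.
Proof.
have [_ _ hn] := hip.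
rewrite -!hn !ipDl ![ip _ (x + y)]ipC !ipDl (ipC y x).
by field.
Qed.

Lemma continuous_ip (T : topologicalType) (g h : T -> H) :
  continuous g -> continuous h -> continuous (fun t => ip (g t) (h t)).
Proof.
move=> cg ch x; pose nm (k : T -> H) t := `|k t|.
have cnm (k : T -> H) : continuous k -> {for x, continuous (nm k \* nm k)}.
  move=> ck; have cnk : {for x, continuous (nm k)}.
    by apply: (continuous_comp (ck x)); exact: norm_continuous.
  exact: continuousM.
have -> : (fun t => ip (g t) (h t)) =
    (nm (g + h) \* nm (g + h) - nm g \* nm g - nm h \* nm h) \* cst 2^-1.
  by apply/funext => t; rewrite /= ip_polarization !expr2.
apply: continuousM; last exact: cst_continuous.
apply: continuousB; first apply: continuousB; apply: cnm => //.
by move=> z; apply: continuousD; [exact: cg|exact: ch].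
Qed.

Lemma ip_skew_self (A : H -> H) :
  (forall x y, ip (A x) y = - ip x (A y)) -> forall x, ip (A x) x = 0.
Proof.
by move=> hA x; have := hA x x; rewrite (ipC x); lra.
Qed.

End InnerProduct.

Section PolynomialPaths.
Variables (R : realType) (H : normedModType R).

Lemma is_derive_scalel (f : R -> R) (df : R) (a : H) (x : R) :
  is_derive x 1 f df -> is_derive x 1 (fun t => f t *: a) (df *: a).
Proof.
move=> fdf; have df1 : differentiable f x by apply/derivable1_diffP.
have dfa : differentiable (fun t => f t *: a) x by exact: differentiableZl.
apply: DeriveDef; first exact/derivable1_diffP.
by rewrite deriveE // diffZl // -deriveE // derive_val.
Qed.

Lemma is_derive_Hpoly_sum n (a : nat -> H) (x : R) :
  is_derive x 1 (fun t => \sum_(k < n.+1) t ^+ k *: a k)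
    (\sum_(k < n.+1) (k%:R * x ^+ k.-1) *: a k).
Proof.
have monomial (k : 'I_n.+1) :
    is_derive x 1 (fun t => t ^+ k *: a k) ((k%:R * x ^+ k.-1) *: a k).
  apply: is_derive_scalel.
  have := is_deriveX k (is_derive_id x (1 : R)).
  by rewrite exprfctE /= [X in is_derive _ _ _ X]/GRing.scale /= mulr1.
by have := is_derive_sum monomial; rewrite fct_sumE.
Qed.

Lemma Hpoly_derivable n (f : R -> H) (x : R) : Hpoly n f -> derivable f x 1.
Proof.
move=> [a /funext ->].
by have := is_derive_Hpoly_sum n a x.
Qed.

Lemma Hpoly_derive1 n (f : R -> H) : Hpoly n.+1 f -> Hpoly n (derive1 f).
Proof.
move=> [a /funext ->]; exists (fun k => k.+1%:R *: a k.+1) => t.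
have dP := is_derive_Hpoly_sum n.+1 a t.
rewrite derive1E derive_val big_ord_recl /= mul0r scale0r add0r.
by apply: eq_bigr => i _; rewrite scalerA mulrC.
Qed.

End PolynomialPaths.

Lemma Rintegral_derive1 (R : realType) (h : R -> R) (a b : R) : a < b ->
  (forall x, derivable h x 1) -> continuous (derive1 h) ->
  Rintegral (@lebesgue_measure R) `[a, b] (derive1 h) = h b - h a.
Proof.
move=> ab dh ch.
have ct : continuous h.
  by move=> x; apply/differentiable_continuous/derivable1_diffP.
rewrite /Rintegral (@continuous_FTC2 R _ h) //; first exact: continuous_subspaceT.
split; first by move=> x _.
- exact/cvg_at_right_filter/ct.
- exact/cvg_at_left_filter/ct.
Qed.

Section GradientChainRule.
Variables (R : realType) (H : normedModType R) (ip : H -> H -> R).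
Hypothesis hip : is_inner_product ip.
Variables (F : H -> R) (gradF : H -> H).
Hypothesis hFd : forall x, differentiable F x.
Hypothesis hgrad : forall x v, 'd F x v = ip (gradF x) v.

Lemma derive1_comp_gradient (g : R -> H) (x : R) : differentiable g x ->
  derive1 (F \o g) x = ip (gradF (g x)) (derive1 g x).
Proof.
move=> dg; rewrite !derive1E' //; last exact: differentiable_comp.
by rewrite diff_comp //= hgrad.
Qed.

Lemma Rintegral_gradient_path (g : R -> H) (a b : R) : a < b ->
  continuous gradF -> (forall x, differentiable g x) -> continuous (derive1 g) ->
  Rintegral (@lebesgue_measure R) `[a, b] (fun t => ip (gradF (g t)) (derive1 g t))
  = F (g b) - F (g a).
Proof.
move=> ab cgrad dg cg'.
have dFg x : differentiable (F \o g) x by exact: differentiable_comp.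
have dFgE : derive1 (F \o g) = (fun t => ip (gradF (g t)) (derive1 g t)).
  by apply/funext => t; rewrite derive1_comp_gradient.
rewrite -dFgE; apply: Rintegral_derive1 => // [x|]; first exact/derivable1_diffP.
rewrite dFgE; apply: continuous_ip => // t.
by apply: continuous_comp; [exact: differentiable_continuous|exact: cgrad].
Qed.

End GradientChainRule.

Theorem theorem3p2 (R : realType) (H : completeNormedModType R)
  (ip : H -> H -> R) (hip : is_inner_product ip)
  (F : H -> R) (gradF : H -> H)
  (hFd : forall x, differentiable F x)
  (hgrad : forall x v, 'd F x v = ip (gradF x) v)
  (hgc : continuous gradF)
  (M S : H -> H -> H)
  (hMlin : forall p, is_linear_op (M p)) (hSlin : forall p, is_linear_op (S p))
  (hMsym : forall p x y, ip (M p x) y = ip x (M p y))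
  (hSskew : forall p x y, ip (S p x) y = - ip x (S p y))
  (tn tn1 : R) (htn : tn < tn1) (s : nat) (hs : (1 <= s)%N)
  (Phin : H) (Phih mu : R -> H)
  (hPhi : Hpoly s Phih) (hPhi0 : Phih tn = Phin) (hmu : Hpoly s.-1 mu)
  (heq1 : forall U : R -> H, Hpoly s.-1 U ->
     [/\ (@lebesgue_measure R).-integrable `[tn, tn1]
           (fun t => (ip (derive1 Phih t) (U t))%:E),
         (@lebesgue_measure R).-integrable `[tn, tn1]
           (fun t => (ip (M (Phih t) (mu t) + S (Phih t) (mu t)) (U t))%:E)
       & Rintegral (@lebesgue_measure R) `[tn, tn1] (fun t => ip (derive1 Phih t) (U t))
         = Rintegral (@lebesgue_measure R) `[tn, tn1]
             (fun t => ip (M (Phih t) (mu t) + S (Phih t) (mu t)) (U t))])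
  (heq2 : forall nu : R -> H, Hpoly s.-1 nu ->
     [/\ (@lebesgue_measure R).-integrable `[tn, tn1]
           (fun t => (ip (mu t) (nu t))%:E),
         (@lebesgue_measure R).-integrable `[tn, tn1]
           (fun t => (ip (gradF (Phih t)) (nu t))%:E)
       & Rintegral (@lebesgue_measure R) `[tn, tn1] (fun t => ip (mu t) (nu t))
         = Rintegral (@lebesgue_measure R) `[tn, tn1]
             (fun t => ip (gradF (Phih t)) (nu t))]) :
  F (Phih tn1) - F Phin =
  Rintegral (@lebesgue_measure R) `[tn, tn1] (fun t => ip (M (Phih t) (mu t)) (mu t)).
Proof.
case: s hs hPhi hmu heq1 heq2 => // s _ hPhi hmu heq1 heq2.
have hPhi' : Hpoly s (derive1 Phih) := Hpoly_derive1 hPhi.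
have [_ _ test_mu] := heq1 mu hmu.
have [_ _ test_Phi'] := heq2 _ hPhi'.
have dPhi x : differentiable Phih x.
  by apply/derivable1_diffP; exact: Hpoly_derivable hPhi.
have cPhi' : continuous (derive1 Phih).
  by move=> x; apply/differentiable_continuous/derivable1_diffP;
    exact: Hpoly_derivable hPhi'.
rewrite -hPhi0 -(Rintegral_gradient_path hip hFd hgrad htn hgc dPhi cPhi').
rewrite -test_Phi'; under eq_Rintegral => t _ do rewrite ipC //.
rewrite test_mu; apply: eq_Rintegral => t _.
by rewrite ipDl // (ip_skew_self hip (hSskew _)) addr0.
Qed.
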